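(* If $L$ is a regular language, then ${\rm bdi}(L)$ is regular.
   Context: For a word $w=a_1\cdots a_n$, ${\rm fh}(w)=a_1\cdots a_{\lfloor n/2\rfloor}$ and ${\rm lh}(w)=a_{\lfloor n/2\rfloor+1}\cdots a_n$. For words $x=a_1\cdots a_m$ and $y=b_1\cdots b_m$ the perfect shuffle is $x\,\text{sh}\,y=a_1b_1\cdots a_mb_m$, and if $y=b_1\cdots b_{m+1}$ has length $m+1$ then $x\,\text{sh}\,y=a_1b_1\cdots a_mb_mb_{m+1}$. ${\rm bdi}(w)={\rm fh}(w)\,\text{sh}\,{\rm lh}(w)$ and ${\rm bdi}(L)=\{{\rm bdi}(w):w\in L\}$. *)

From mathcomp Require Import all_boot.
Set Implicit Arguments. Unset Strict Implicit. Unset Printing Implicit Defensive.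

Definition lang (A : Type) := seq A -> Prop.

Record dfa (A : finType) := DFA {
  dfa_state : finType;
  dfa_start : dfa_state;
  dfa_final : pred dfa_state;
  dfa_trans : dfa_state -> A -> dfa_state }.

Definition dfa_run (A : finType) (M : dfa A) (q : dfa_state M) (w : seq A) :=
  foldl (@dfa_trans A M) q w.

Definition dfa_accept (A : finType) (M : dfa A) (w : seq A) : bool :=
  @dfa_final A M (@dfa_run A M (@dfa_start A M) w).

Definition regular (A : finType) (L : lang A) : Prop :=
  exists M : dfa A, forall w, L w <-> dfa_accept M w.

Definition fh (A : Type) (w : seq A) := take (size w)./2 w.
Definition lh (A : Type) (w : seq A) := drop (size w)./2 w.

(* perfect shuffle a1 b1 a2 b2 ... ; extra letters (only ever b_{m+1} here)
   are appended at the end *)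
Fixpoint shuffle (A : Type) (x y : seq A) : seq A :=
  match x, y with
  | a :: x', b :: y' => a :: b :: shuffle x' y'
  | [::], _ => y
  | _, [::] => x
  end.

Definition bdi (A : Type) (w : seq A) := shuffle (fh w) (lh w).

Definition bdi_lang (A : Type) (L : lang A) : lang A :=
  fun v => exists w, L w /\ v = bdi w.

From mathcomp Require Import all_boot zify.

Set Implicit Arguments. Unset Strict Implicit. Unset Printing Implicit Defensive.

(* Call a pair (x, y) balanced when |y| = |x| or |y| = |x| + 1:
   the halves of every word are balanced, every word is the shuffle of some
   balanced pair, and bdi(x ++ y) = x sh y for balanced (x, y).
   Hence v lies in bdi(L) iff v = x sh y for a balanced (x, y) with
   x ++ y in L.
   Given a DFA M for L, the automaton [shuffle_dfa M] reads x sh y in pairs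
   of letters: it runs M on the letters of x, and records the state
   transformation induced by the letters of y read so far, buffering the
   letter at odd positions.  At the end it composes both, which simulates M on
   x ++ y (the buffered letter, if any, being the extra last letter of y). *)

Section Shuffle.
Variable A : Type.
Implicit Types x y v w : seq A.

Definition balanced x y : bool :=
  (size y == size x) || (size y == (size x).+1).

Lemma shuffle_rcons x y c : size x = size y ->
  shuffle x (rcons y c) = rcons (shuffle x y) c.
Proof. by elim: x y => [|a x IH] [|b y] //= [/IH ->]. Qed.

Lemma balanced_halves w : balanced (fh w) (lh w).
Proof.
have le_half : (size w)./2 <= size w by rewrite leq_half_double; lia.
rewrite /balanced /fh /lh size_drop size_takel //.
have := odd_double_half (size w); case: odd => /=; lia.
Qed.

Lemma half_size_cat x y : balanced x y -> (size (x ++ y))./2 = size x.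
Proof.
rewrite size_cat => /orP[] /eqP ->; first by rewrite addnn doubleK.
by rewrite addnS addnn /= uphalf_double.
Qed.

Lemma bdi_cat x y : balanced x y -> bdi (x ++ y) = shuffle x y.
Proof.
by move=> /half_size_cat Hh; rewrite /bdi /fh /lh Hh take_size_cat // drop_size_cat.
Qed.

Lemma shuffle_balanced_surj v : exists x y, balanced x y /\ v = shuffle x y.
Proof.
elim: {v}(size v) {-2}v (leqnn (size v)) => [|n IH] [|a [|b v]] //= Hs.
- by exists [::], [::].
- by exists [::], [::].
- by exists [::], [:: a].
- have [x [y [bal_xy ->]]] := IH v (ltnW Hs).
  by exists (a :: x), (b :: y).
Qed.

End Shuffle.

Section ShuffleDFA.
Variables (A : finType) (M : dfa A).
Local Notation Q := (dfa_state M).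

(* State (p, f, o): p is the run of M on the x-letters read so far, f the
   transformation induced by the y-letters, o the buffered x-letter whose
   y-partner has not been read yet. *)
Definition shuffle_state := (Q * {ffun Q -> Q} * option A)%type.

Definition shuffle_trans (s : shuffle_state) (c : A) : shuffle_state :=
  match s with
  | (p, f, None) => (p, f, Some c)
  | (p, f, Some a) => (dfa_trans p a, [ffun q => dfa_trans (f q) c], None)
  end.

(* At the end, a buffered letter is the extra last letter of y. *)
Definition shuffle_final (s : shuffle_state) : bool :=
  match s with
  | (p, f, None) => dfa_final (f p)
  | (p, f, Some c) => dfa_final (dfa_trans (f p) c)
  end.

Definition shuffle_dfa : dfa A :=
  @DFA A shuffle_state (dfa_start M, [ffun q => q], None)
       shuffle_final shuffle_trans.

Lemma run_shuffle (x y : seq A) p f : size x = size y ->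
  foldl shuffle_trans (p, f, None) (shuffle x y) =
  (dfa_run p x, [ffun q => dfa_run (f q) y], None).
Proof.
elim: x y p f => [|a x IH] [|b y] p f //= Hxy.
  by congr (_, _, _); apply/ffunP => q; rewrite ffunE.
by case: Hxy => /IH ->; congr (_, _, _); apply/ffunP => q; rewrite !ffunE.
Qed.

Lemma accept_shuffle_dfa (x y : seq A) : balanced x y ->
  dfa_accept shuffle_dfa (shuffle x y) = dfa_accept M (x ++ y).
Proof.
rewrite /balanced /dfa_accept /dfa_run /= => /orP[] /eqP Hxy.
  by rewrite run_shuffle // /= !ffunE /dfa_run foldl_cat.
move: Hxy; case/lastP: y => [|y c] //; rewrite size_rcons => -[Hxy].
rewrite shuffle_rcons // -cats1 foldl_cat run_shuffle //=.
by rewrite !ffunE /dfa_run -cats1 !foldl_cat.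
Qed.

End ShuffleDFA.

Theorem mainTheorem13 (A : finType) (L : lang A) :
  regular L -> regular (bdi_lang L).
Proof.
case=> M HM; exists (shuffle_dfa M) => v; split.
  case=> w [Lw ->]; rewrite /bdi accept_shuffle_dfa ?balanced_halves //.
  by rewrite cat_take_drop; apply/HM.
have [x [y [bal_xy ->]]] := shuffle_balanced_surj v.
rewrite accept_shuffle_dfa // => /HM Lxy.
by exists (x ++ y); rewrite bdi_cat.
Qed.
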